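(* Let $\Gamma$ be a semigroup with identity $e$ and $\rho:\Gamma\to\mathrm{End}(G)$ an expansive endomorphism action with $\rho(e)=\mathrm{Id}$ on a solenoid $G$. Then for every non-zero $p\in L(G)$, the orbit $\{\rho_e(\gamma)(p):\gamma\in\Gamma\}$ is unbounded in $L(G)$.
   Context: A solenoid is a compact connected finite-dimensional metrizable abelian group; equivalently its dual $\widehat G$ is a torsion-free discrete abelian group of finite rank. $L(G)$ is the (finite-dimensional) real vector space of homomorphisms $\widehat G\to\mathbb R$, and $\rho_e(\gamma)(p)(\chi)=p(\chi\circ\rho(\gamma))$. The action is expansive if there is a neighborhood $U$ of the identity with $\bigcap_{\gamma}\rho(\gamma)^{-1}(U)=\{e\}$. *)

From HB Require Import structures.
From mathcomp Require Import all_boot all_order all_algebra.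
From mathcomp Require Import reals Rstruct.
Set Implicit Arguments. Unset Strict Implicit. Unset Printing Implicit Defensive.
Import Order.TTheory GRing.Theory Num.Theory.
Local Open Scope ring_scope.

(* A solenoid G is encoded through its dual group A = \hat G, a torsion-free
   abelian group of finite rank (Pontryagin duality); G = Hom(A, R/Z). *)

Definition torsion_free (A : zmodType) : Prop :=
  forall (a : A) (n : nat), a *+ n.+1 = 0 -> a = 0.

Definition finite_rank (A : zmodType) : Prop :=
  exists s : seq A, forall a : A, exists (n : nat) (c : nat -> int),
    a *+ n.+1 = \sum_(i < size s) (s`_i *~ c i).

(* R/Z is represented by [0,1) with addition modulo 1 *)
Definition frac (R : realType) (x : R) : R := x - (Num.floor x)%:~R.

Definition circ_dist (R : realType) (x : R) : R := Num.min (frac x) (1 - frac x).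

(* elements of G = Hom(A, R/Z), represented by their [0,1)-valued values *)
Definition is_char (A : zmodType) (R : realType) (g : A -> R) : Prop :=
  (forall a, 0 <= g a < 1) /\ (forall a b, g (a + b) = frac (g a + g b)).

(* U is a neighbourhood of the identity of G (dual = pointwise topology,
   basic neighbourhoods {g | forall a in F, ||g a|| < eps}) *)
Definition nbhd0 (A : zmodType) (R : realType) (U : (A -> R) -> Prop) : Prop :=
  exists (F : seq A) (eps : R), 0 < eps /\
    forall g, is_char g -> (forall a, a \in F -> circ_dist (g a) < eps) -> U g.

(* phi g is the dual endomorphism of A of rho(g) in End(G):
   rho(g)(x) = x o phi g for x in G = Hom(A,R/Z).
   Expansive: exists U nbhd of e with  bigcap_g rho(g)^{-1}(U) = {e}. *)
Definition expansive (Gam : Type) (A : zmodType) (R : realType)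
    (phi : Gam -> A -> A) : Prop :=
  exists U : (A -> R) -> Prop, nbhd0 U /\
    forall g : A -> R, is_char g ->
      (forall gam, U (fun a => g (phi gam a))) -> g = (fun _ => 0).

From Pilot Require Import Defs.
From HB Require Import structures.
From mathcomp Require Import all_boot all_order all_algebra.
From mathcomp Require Import reals Rstruct.
From mathcomp Require Import lra.
From Stdlib Require Import Classical FunctionalExtensionality.

Set Implicit Arguments.
Unset Strict Implicit.
Unset Printing Implicit Defensive.
Import Order.TTheory GRing.Theory Num.Theory.
Local Open Scope ring_scope.

Local Notation frac := Defs.frac.

(* If the orbit of p were bounded, a small enough multiple t p would stay,
   along every orbit and on the finitely many coordinates defining the
   expansivity neighbourhood U, within eps of 0.  Reducing t p modulo 1 gives
   a character g of G = Hom(A, R/Z) all of whose translates g o phi(gam) lie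
   in U, so g is trivial by expansivity.  Choosing t so that also
   |t p a0| < 1 for some a0 with p a0 <> 0 then forces t p a0 = 0, which is
   absurd.  Only one direction of the duality is used. *)

Section FracCircle.
Variable R : realType.
Implicit Types x y : R.

Lemma frac_intrD x (n : int) : frac (x + n%:~R) = frac x.
Proof.
rewrite /frac floorDrz ?intr_int // intrKfloor rmorphD /=.
by rewrite opprD addrACA subrr addr0.
Qed.

Lemma fracE x : frac x = x + (- Num.floor x)%:~R.
Proof. by rewrite /frac rmorphN. Qed.

Lemma frac_frac x : frac (frac x) = frac x.
Proof. by rewrite {1}(fracE x) frac_intrD. Qed.

Lemma frac_fracD x y : frac (frac x + frac y) = frac (x + y).
Proof. by rewrite (fracE x) (fracE y) addrACA -rmorphD frac_intrD. Qed.

Lemma frac_ge0_lt1 x : 0 <= frac x < 1.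
Proof.
rewrite /frac subr_ge0 floor_le /= ltrBlDr.
by rewrite addrC -[1]/(1%:~R) -rmorphD floorD1_gt.
Qed.

Lemma circ_dist_frac_le_norm x : circ_dist (frac x) <= `|x|.
Proof.
rewrite /circ_dist frac_frac /frac ge_min; have [x0|x0] := leP 0 x.
  have fl0 : 0 <= (Num.floor x)%:~R :> R by rewrite ler0z floor_ge0.
  by rewrite ger0_norm //; apply/orP; left; lra.
have fl1 : (Num.floor x)%:~R <= -1 :> R.
  by rewrite -[-1]/((-1)%:~R) ler_int -ltzD1 /= addNr floor_lt0.
by rewrite ltr0_norm //; apply/orP; right; lra.
Qed.

Lemma frac_eq0_norm_lt1 x : `|x| < 1 -> frac x = 0 -> x = 0.
Proof.
move=> x1 /eqP; rewrite subr_eq0 => /eqP xE.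
move: x1; rewrite xE -intr_norm -[1]/(1%:~R) ltr_int ltz_nat ltnS leqn0.
by rewrite absz_eq0 => /eqP ->.
Qed.

End FracCircle.

Lemma is_char_frac (A : zmodType) (R : realType) (q : A -> R) :
  (forall a b, q (a + b) = q a + q b) -> is_char (fun a => frac (q a)).
Proof.
move=> qD; split=> [a|a b]; first exact: frac_ge0_lt1.
by rewrite frac_fracD qD.
Qed.

Lemma expansive_frac_eq0 (Gam : Type) (A : zmodType) (R : realType)
    (phi : Gam -> A -> A) :
  (forall gam (x y : A), phi gam (x + y) = phi gam x + phi gam y) ->
  expansive R phi ->
  exists (F : seq A) (eps : R), 0 < eps /\
    forall q : A -> R, (forall a b, q (a + b) = q a + q b) ->
      (forall gam a, a \in F -> `|q (phi gam a)| < eps) ->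
      forall a, frac (q a) = 0.
Proof.
move=> phiD [U [[F [eps [eps0 HU]]] Hexp]].
exists F, eps; split=> // q qD qsmall a.
suff qE : (fun a => frac (q a)) = (fun _ => 0) by rewrite (congr1 (@^~ a) qE).
apply: Hexp; first exact: is_char_frac.
move=> gam; apply: HU => [|b bF].
  by apply: is_char_frac => x y; rewrite phiD qD.
exact: le_lt_trans (circ_dist_frac_le_norm _) (qsmall gam b bF).
Qed.

Lemma bounded_on_seq (Gam : Type) (A : eqType) (R : realDomainType)
    (f : Gam -> A -> R) (F : seq A) :
  (forall a, exists M, forall gam, `|f gam a| <= M) ->
  exists M, forall a, a \in F -> forall gam, `|f gam a| <= M.
Proof.
move=> fbd; elim: F => [|b F [M HM]]; first by exists 0.
have [Mb HMb] := fbd b; exists (Num.max M Mb) => a.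
rewrite inE => /orP [/eqP -> | aF] gam; rewrite le_max.
  by rewrite HMb orbT.
by rewrite HM.
Qed.

Lemma scale_below (R : realFieldType) (c B : R) :
  0 < c -> 0 <= B -> exists2 t, 0 < t & forall y, `|y| <= B -> `|t * y| < c.
Proof.
move=> c0 B0; have B1 : 0 < B + 1 by lra.
exists (c / (B + 1)); first by rewrite divr_gt0.
move=> y yB; rewrite normrM ger0_norm ?divr_ge0 ?ltW //.
rewrite mulrAC ltr_pdivrMr // ltr_pM2l //; lra.
Qed.

Theorem proposition4p4 (Gam : Type) (mul : Gam -> Gam -> Gam) (e : Gam)
    (A : zmodType) (phi : Gam -> A -> A) :
  (forall x y z, mul x (mul y z) = mul (mul x y) z) ->
  (forall x, mul e x = x) -> (forall x, mul x e = x) ->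
  torsion_free A -> finite_rank A ->
  (forall gam (x y : A), phi gam (x + y) = phi gam x + phi gam y) ->
  (forall gam del (a : A), phi (mul gam del) a = phi del (phi gam a)) ->
  (forall a, phi e a = a) ->
  @expansive Gam A Rdefinitions.R phi ->
  forall p : A -> Rdefinitions.R,
    (forall x y, p (x + y) = p x + p y) ->
    p <> (fun _ => 0) ->
    ~ (forall a : A, exists M : Rdefinitions.R, forall gam, `|p (phi gam a)| <= M).
Proof.
move=> _ _ _ _ _ phiD _ _ Hexp p pD p0 pbd.
have [a0 pa0] : exists a0, p a0 <> 0.
  apply: NNPP => Hp; apply: p0; apply: functional_extensionality => a.
  by apply: NNPP => pa; apply: Hp; exists a.
have [F [eps [eps0 Hfrac]]] := expansive_frac_eq0 phiD Hexp.
have [M HM] := bounded_on_seq F pbd.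
have [t t0 tsmall] : exists2 t : Rdefinitions.R, 0 < t &
    forall y, `|y| <= Num.max M `|p a0| -> `|t * y| < Num.min eps 1.
  by apply: scale_below; rewrite ?lt_min ?eps0 ?ltr01 // le_max normr_ge0 orbT.
have tpD x y : t * p (x + y) = t * p x + t * p y by rewrite pD mulrDr.
have tp_small gam a : a \in F -> `|t * p (phi gam a)| < eps.
  move=> aF; have := tsmall (p (phi gam a)).
  by rewrite le_max HM // lt_min => /(_ isT) /andP[].
have tpa0 : t * p a0 = 0.
  apply: frac_eq0_norm_lt1 (Hfrac _ tpD tp_small a0).
  have := tsmall (p a0); rewrite le_max lexx orbT lt_min.
  by move=> /(_ isT) /andP[].
by apply: pa0; move/eqP: tpa0; rewrite mulf_eq0 gt_eqF //= => /eqP.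
Qed.
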